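(* Let $p$ and $q$ be positive integers with $q\ge 2$ and $\gcd(p,q)=1$, and let $\xi_j=e^{2\pi i j/q}$. Then $$\sum_{j=1}^{q-1}\frac{\xi_j}{(\xi_j-1)^2(\xi_j^p-1)}=\frac{q^2-1}{24}.$$ *)

From mathcomp Require Import all_boot all_algebra.
From mathcomp Require Import complex.
From mathcomp Require Import all_classical all_reals all_analysis.
Import GRing.Theory Num.Theory.
Local Open Scope ring_scope.
Local Open Scope complex_scope.

Definition xi {R : realType} (q j : nat) : R[i] :=
  (cos (2 * pi * j%:R / q%:R)) +i* (sin (2 * pi * j%:R / q%:R)).

From mathcomp Require Import all_boot all_algebra.
From mathcomp Require Import complex.
From mathcomp Require Import all_classical all_reals all_analysis.
From mathcomp Require Import ring lra.
Set Implicit Arguments.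
Unset Strict Implicit.
Unset Printing Implicit Defensive.

Import GRing.Theory Num.Theory.
Local Open Scope ring_scope.
Local Open Scope complex_scope.

(* Pairing the terms of [j] and [q - j] (note [xi q (q - j)] is the inverse of [xi q j])
   turns the sum into [- 1/2] times the sum of [w / (w - 1)^2] over the nontrivial
   [q]-th roots of unity [w], which no longer depends on [p].  Two summations by parts
   give [w / (w - 1)^2 = (2q)^-1 * \sum_(k < q) k (q - k) w^k] for such [w], and summing
   over [w] kills every power [w^k] with [0 < k < q] up to a factor [-1], leaving
   [- \sum_(k < q) k (q - k) / (2q) = - (q^2 - 1) / 12]. *)

Lemma sub1_mul_sum_expr (R : comPzRingType) (a : nat -> R) (x : R) n :
  (x - 1) * \sum_(k < n) a k * x ^+ k =
  a n * x ^+ n - a 0%N - x * \sum_(k < n) (a k.+1 - a k) * x ^+ k.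
Proof.
elim: n => [|n IHn]; first by rewrite !big_ord0 !mulr0 expr0 mulr1 subrr subr0.
by rewrite !big_ord_recr /= mulrDr IHn exprS; ring.
Qed.

Lemma unity_root_sum_expr_eq0 (F : idomainType) (w : F) q :
  w ^+ q = 1 -> w != 1 -> \sum_(k < q) w ^+ k = 0.
Proof.
move=> wq1 w_neq1; apply/eqP; move: (subrX1 w q).
by rewrite wq1 subrr => /esym/eqP; rewrite mulf_eq0 subr_eq0 (negbTE w_neq1).
Qed.

Lemma unity_root_div_sub1_sqr (F : numFieldType) (w : F) q :
  (0 < q)%N -> w ^+ q = 1 -> w != 1 ->
  w / (w - 1) ^+ 2 = (2 * q%:R)^-1 * \sum_(k < q) k%:R * (q%:R - k%:R) * w ^+ k.
Proof.
move=> q_gt0 wq1 w_neq1.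
set c := fun k : nat => k%:R * (q%:R - k%:R) : F.
set d := fun k : nat => q%:R - 2 * k%:R - 1 : F.
have dc : \sum_(k < q) (c k.+1 - c k) * w ^+ k = \sum_(k < q) d k * w ^+ k.
  by apply: eq_bigr => k _; rewrite /c /d -[k.+1%:R]natr1; ring.
have dd : \sum_(k < q) (d k.+1 - d k) * w ^+ k = -2 * \sum_(k < q) w ^+ k.
  by rewrite big_distrr /=; apply: eq_bigr => k _; rewrite /d -[k.+1%:R]natr1; ring.
have sum_c : (w - 1) * \sum_(k < q) c k * w ^+ k = - (w * \sum_(k < q) d k * w ^+ k).
  by rewrite sub1_mul_sum_expr dc wq1 /c; ring.
have sum_d : (w - 1) * \sum_(k < q) d k * w ^+ k = - 2 * q%:R.
  by rewrite sub1_mul_sum_expr dd unity_root_sum_expr_eq0 // wq1 /d; ring.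
have sqr_sum_c : (w - 1) ^+ 2 * \sum_(k < q) c k * w ^+ k = 2 * q%:R * w.
  by rewrite expr2 -mulrA sum_c mulrN mulrCA sum_d; ring.
have w1_neq0 : w - 1 != 0 by rewrite subr_eq0.
have q_neq0 : q%:R != 0 :> F by rewrite pnatr_eq0 -lt0n.
rewrite -[X in _ = _ * X](mulKf (expf_neq0 2 w1_neq0)) sqr_sum_c.
by field; rewrite w1_neq0 q_neq0.
Qed.

Lemma sum_mul_sub_natr (R : comPzRingType) q n :
  6 * \sum_(k < n) k%:R * (q%:R - k%:R) =
  3 * q%:R * n%:R * (n%:R - 1) - (n%:R - 1) * n%:R * (2 * n%:R - 1) :> R.
Proof.
elim: n => [|n IHn]; first by rewrite big_ord0; ring.
by rewrite big_ord_recr /= mulrDr IHn -[n.+1%:R]natr1; ring.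
Qed.

Lemma div_sub1_sqr_addV (F : fieldType) (w y : F) :
  w != 0 -> w != 1 -> y != 0 -> y != 1 ->
  w / ((w - 1) ^+ 2 * (y - 1)) + w^-1 / ((w^-1 - 1) ^+ 2 * (y^-1 - 1)) =
  - (w / (w - 1) ^+ 2).
Proof.
move=> w_neq0 w_neq1 y_neq0 y_neq1.
by field; rewrite !mulN1r !subr_eq0 ![1 == _]eq_sym w_neq0 w_neq1 y_neq0 y_neq1.
Qed.

Section PrimitiveRootSums.

Variables (F : numFieldType) (q : nat) (z : F).
Hypothesis prim_z : q.-primitive_root z.

Let q_gt0 : (0 < q)%N := prim_order_gt0 prim_z.

Lemma prim_root_expr_neq0 k : z ^+ k != 0.
Proof. by rewrite expf_neq0 // (prim_root_eq0 prim_z) -lt0n. Qed.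

Lemma sum_prim_root_expr_nontrivial k :
  ~~ (q %| k)%N -> \sum_(1 <= j < q) (z ^+ k) ^+ j = -1.
Proof.
rewrite (prim_order_dvd prim_z) => zk_neq1.
have zkq : (z ^+ k) ^+ q = 1 by rewrite exprAC (prim_expr_order prim_z) expr1n.
have := unity_root_sum_expr_eq0 zkq zk_neq1.
by rewrite -(big_mkord xpredT) big_ltn // expr0 => /eqP; rewrite addrC addr_eq0 => /eqP.
Qed.

Lemma sum_prim_root_div_sub1_sqr :
  \sum_(1 <= j < q) z ^+ j / (z ^+ j - 1) ^+ 2 = (1 - q%:R ^+ 2) / 12.
Proof.
pose c k : F := k%:R * (q%:R - k%:R).
have term j : (0 < j < q)%N ->
    z ^+ j / (z ^+ j - 1) ^+ 2 = (2 * q%:R)^-1 * \sum_(k < q) c k * (z ^+ k) ^+ j.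
  case/andP=> j_gt0 j_lt_q.
  have zjq : (z ^+ j) ^+ q = 1 by rewrite exprAC (prim_expr_order prim_z) expr1n.
  have zj_neq1 : z ^+ j != 1 by rewrite -(prim_order_dvd prim_z) gtnNdvd.
  rewrite (unity_root_div_sub1_sqr q_gt0 zjq zj_neq1); congr (_ * _).
  by apply: eq_bigr => k _; rewrite exprAC.
have inner k : (k < q)%N -> \sum_(1 <= j < q) c k * (z ^+ k) ^+ j = - c k.
  case: k => [|k] k_lt_q; first by rewrite -big_distrr /c /= !mul0r oppr0.
  by rewrite -big_distrr /= sum_prim_root_expr_nontrivial ?gtnNdvd // mulrN1.
rewrite big_nat_cond; under eq_bigr => j /andP[j_range _] do rewrite term //.
rewrite -big_distrr /= -big_nat_cond exchange_big /=.
under eq_bigr => k _ do rewrite inner //.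
rewrite sumrN /c -[\sum_(k < q) _](@mulKf _ 6) ?pnatr_eq0 // sum_mul_sub_natr.
by field; rewrite pnatr_eq0 -lt0n.
Qed.

Lemma sum_prim_root_exprV (g : F -> F) :
  \sum_(1 <= j < q) g (z ^+ j) = \sum_(1 <= j < q) g (z ^+ j)^-1.
Proof.
rewrite big_nat_rev /= big_nat_cond [RHS]big_nat_cond.
apply: eq_bigr => j /andP[/andP[j_gt0 j_lt_q] _]; congr g.
apply: (mulIf (prim_root_expr_neq0 j)); rewrite mulVf ?prim_root_expr_neq0 // -exprD.
by rewrite add1n subSS subnK ?(prim_expr_order prim_z) // ltnW.
Qed.

Lemma sum_prim_root_div_sub1_sqr_mul_subX1 p : coprime p q ->
  \sum_(1 <= j < q) z ^+ j / ((z ^+ j - 1) ^+ 2 * ((z ^+ j) ^+ p - 1)) =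
  (q%:R ^+ 2 - 1) / 24.
Proof.
move=> co_pq; set S := LHS.
have S2 : S + S = - \sum_(1 <= j < q) z ^+ j / (z ^+ j - 1) ^+ 2.
  rewrite {2}/S (sum_prim_root_exprV (fun w => w / ((w - 1) ^+ 2 * (w ^+ p - 1)))).
  rewrite -big_split -sumrN big_nat_cond [RHS]big_nat_cond.
  apply: eq_bigr => j /andP[/andP[j_gt0 j_lt_q] _] /=.
  rewrite exprVn div_sub1_sqr_addV ?prim_root_expr_neq0 -?exprM ?prim_root_expr_neq0 //.
    by rewrite -(prim_order_dvd prim_z) gtnNdvd.
  by rewrite -(prim_order_dvd prim_z) Gauss_dvdl 1?coprime_sym // gtnNdvd.
rewrite sum_prim_root_div_sub1_sqr in S2.
have -> : S = (S + S) / 2 by field.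
by rewrite S2; field.
Qed.

End PrimitiveRootSums.

Lemma xi_expr (R : realType) q j : xi q j = xi q 1 ^+ j :> R[i].
Proof.
elim: j => [|j IHj]; first by rewrite /xi mulr0 mul0r cos0 sin0.
rewrite exprSr -IHj /xi -[j.+1%:R]natr1 mulrDr mulrDl cosD sinD mulr1.
by rewrite [sin _ * cos _ + _]addrC.
Qed.

Lemma xi_neq1 (R : realType) q r : (0 < r < q)%N -> xi q r != 1 :> R[i].
Proof.
case/andP=> r_gt0 r_lt_q; have q_gt0 : (0 < q)%N := ltn_trans r_gt0 r_lt_q.
apply/eqP => /(congr1 (@complex.Re R)) /=.
set h : R := pi * r%:R / q%:R.
have h_range : 0 < h < pi.
  rewrite divr_gt0 ?mulr_gt0 ?pi_gt0 ?ltr0n //= ltr_pdivrMr ?ltr0n //.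
  by rewrite ltr_pM2l ?pi_gt0 ?ltr_nat.
have -> : 2 * pi * r%:R / q%:R = h *+ 2 by rewrite /h mulr2n; ring.
rewrite cos_mulr2n => cos2h.
have : sin h ^+ 2 = 0 by rewrite sin2cos2; lra.
by move/eqP; rewrite expf_eq0 /= => /eqP sinh0; move: (sin_gt0_pi h_range); lra.
Qed.

Lemma xi_prim_root (R : realType) q : (0 < q)%N -> q.-primitive_root (xi q 1 : R[i]).
Proof.
move=> q_gt0.
have xiq1 : xi q 1 ^+ q = 1 :> R[i].
  rewrite -xi_expr /xi mulfK ?pnatr_eq0 -?lt0n //.
  by rewrite mulr_natl cos2pi sin2pi.
have [m prim_m m_dvd_q] := prim_order_exists q_gt0 xiq1.
have m_gt0 := prim_order_gt0 prim_m.
suff m_eq_q : m = q by rewrite m_eq_q in prim_m.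
apply/eqP; rewrite eqn_leq dvdn_leq //=; apply: contraT; rewrite -ltnNge => m_lt_q.
have := @xi_neq1 R q m; rewrite m_gt0 m_lt_q xi_expr (prim_expr_order prim_m).
by rewrite eqxx => /(_ isT).
Qed.

Theorem mainTheorem8 (R : realType) (p q : nat) :
  (0 < p)%N -> (2 <= q)%N -> coprime p q ->
  \sum_(1 <= j < q)
     (xi q j / ((xi q j - 1) ^+ 2 * ((xi q j) ^+ p - 1)) : R[i])
  = ((q ^ 2 - 1)%:R / 24%:R : R[i]).
Proof.
move=> _ q_ge2 co_pq; have q_gt0 : (0 < q)%N := ltnW q_ge2.
under eq_bigr => j _ do rewrite (xi_expr R q j).
rewrite (sum_prim_root_div_sub1_sqr_mul_subX1 (xi_prim_root R q_gt0) co_pq).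
by rewrite natrB ?expn_gt0 ?q_gt0 // natrX.
Qed.
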